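(* Let $(\mathbf a_1,\mathbf a_2,\mathbf a_3)$ be a nondegenerate m-triangle, and let $\mathbf t_i$ be the torque with respect to the center of mass $O$ of the Newtonian gravitational forces acting at $P_i$, i.e. $\mathbf t_i=\mathbf a_i\times\sum_{j\ne i}\frac{m_im_j}{r_{ij}^3}(\mathbf a_j-\mathbf a_i)$. Then, for $i$ mod $3$, $$\mathbf t_i=\dot{\mathbf\Omega}_i=2m_1m_2m_3\Delta\Big(\frac1{r_{i,i+1}^3}-\frac1{r_{i,i+2}^3}\Big)\mathbf n,$$ where $\mathbf n$ is the unit normal vector such that $(\mathbf a_1,\mathbf a_2,\mathbf n)$ is right-handed.
   Context: Masses $m_1,m_2,m_3>0$ with $m_1+m_2+m_3=1$; position vectors $\mathbf a_i=\overrightarrow{OP_i}$ with $\sum m_i\mathbf a_i=0$; $r_{ij}=|\mathbf a_i-\mathbf a_j|$; $\Delta$ is the area of the triangle $P_1P_2P_3$; $\mathbf\Omega_i=m_i\mathbf a_i\times\dot{\mathbf a}_i$ is the individual angular momentum, whose derivative along a motion satisfying Newton's equations $m_i\ddot{\mathbf a}_i=\sum_{j\neq i}\frac{m_im_j}{r_{ij}^3}(\mathbf a_j-\mathbf a_i)$ equals $\mathbf t_i$. *)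

From Stdlib Require Import Reals Lra.
Open Scope R_scope.

Record V3 := mkV3 { vx : R ; vy : R ; vz : R }.

Definition vadd (u v : V3) : V3 := mkV3 (vx u + vx v) (vy u + vy v) (vz u + vz v).
Definition vsub (u v : V3) : V3 := mkV3 (vx u - vx v) (vy u - vy v) (vz u - vz v).
Definition vscale (c : R) (u : V3) : V3 := mkV3 (c * vx u) (c * vy u) (c * vz u).
Definition vzero : V3 := mkV3 0 0 0.
Definition cross (u v : V3) : V3 :=
  mkV3 (vy u * vz v - vz u * vy v)
       (vz u * vx v - vx u * vz v)
       (vx u * vy v - vy u * vx v).
Definition dot (u v : V3) : R := vx u * vx v + vy u * vy v + vz u * vz v.
Definition vnorm (u : V3) : R := sqrt (dot u u).

(* A configuration: masses m 0, m 1, m 2 and positions a 0, a 1, a 2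
   (indices are natural numbers; only 0,1,2 are used, taken mod 3). *)
Definition r (a : nat -> V3) (i j : nat) : R := vnorm (vsub (a i) (a j)).

Definition area (a : nat -> V3) : R :=
  vnorm (cross (vsub (a 1%nat) (a 0%nat)) (vsub (a 2%nat) (a 0%nat))) / 2.

Definition m_triangle (m : nat -> R) (a : nat -> V3) : Prop :=
  0 < m 0%nat /\ 0 < m 1%nat /\ 0 < m 2%nat /\
  m 0%nat + m 1%nat + m 2%nat = 1 /\
  vadd (vadd (vscale (m 0%nat) (a 0%nat)) (vscale (m 1%nat) (a 1%nat)))
       (vscale (m 2%nat) (a 2%nat)) = vzero.

Definition nondegenerate (a : nat -> V3) : Prop := area a <> 0.

Definition idx (i k : nat) : nat := Nat.modulo (i + k) 3.

Definition force (m : nat -> R) (a : nat -> V3) (i : nat) : V3 :=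
  vadd (vscale (m i * m (idx i 1) / (r a i (idx i 1)) ^ 3) (vsub (a (idx i 1)) (a i)))
       (vscale (m i * m (idx i 2) / (r a i (idx i 2)) ^ 3) (vsub (a (idx i 2)) (a i))).

Definition torque (m : nat -> R) (a : nat -> V3) (i : nat) : V3 :=
  cross (a i) (force m a i).

Definition ang_mom (m : nat -> R) (a adot : nat -> V3) (i : nat) : V3 :=
  vscale (m i) (cross (a i) (adot i)).

(* Unit normal n such that (a_1, a_2, n) is right-handed (a_1 = a 0, a_2 = a 1). *)
Definition unit_normal (a : nat -> V3) : V3 :=
  let c := cross (a 0%nat) (a 1%nat) in vscale (/ vnorm c) c.

Definition has_vderiv (f : R -> V3) (t : R) (d : V3) : Prop :=
  derivable_pt_lim (fun s => vx (f s)) t (vx d) /\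
  derivable_pt_lim (fun s => vy (f s)) t (vy d) /\
  derivable_pt_lim (fun s => vz (f s)) t (vz d).

Definition torque_formula (m : nat -> R) (a : nat -> V3) (i : nat) : V3 :=
  vscale (2 * m 0%nat * m 1%nat * m 2%nat * area a *
          (/ (r a i (idx i 1)) ^ 3 - / (r a i (idx i 2)) ^ 3))
         (unit_normal a).

(* The three vectors a_j × a_k are all parallel to the normal
   T = (a_2 - a_1) × (a_3 - a_1), whose length is 2Δ: since the centre of mass
   m_1 a_1 + m_2 a_2 + m_3 a_3 vanishes and the masses sum to 1, one finds
   a_{i+1} × a_{i+2} = m_i T.  Expanding the torque a_i × F_i therefore gives
   m_1 m_2 m_3 (1/r_{i,i+1}^3 - 1/r_{i,i+2}^3) T, which is the claimed formula
   because n = T/|T|.  For the second part, d/dt (m_i a_i × ȧ_i)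
   = m_i a_i × ä_i = a_i × F_i by Newton's equation, the term ȧ_i × ȧ_i
   vanishing. *)
From Stdlib Require Import Reals Lra Lia.
Open Scope R_scope.

Ltac vec_ring :=
  repeat match goal with u : V3 |- _ => destruct u end;
  unfold vadd, vsub, vscale, vzero, cross; simpl; f_equal; ring.

Lemma vscale_vscale (c d : R) (u : V3) : vscale c (vscale d u) = vscale (c * d) u.
Proof. vec_ring. Qed.

Lemma vscaleDl (c d : R) (u : V3) : vadd (vscale c u) (vscale d u) = vscale (c + d) u.
Proof. vec_ring. Qed.

Lemma cross_anticomm (u v : V3) : cross v u = vscale (-1) (cross u v).
Proof. vec_ring. Qed.

Lemma cross_sub_common_cycle (a0 a1 a2 : V3) :
  cross (vsub a2 a1) (vsub a0 a1) = cross (vsub a1 a0) (vsub a2 a0).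
Proof. vec_ring. Qed.

Lemma cross_lin_comb_sub (u v w : V3) (k1 k2 : R) :
  cross u (vadd (vscale k1 (vsub v u)) (vscale k2 (vsub w u))) =
  vadd (vscale k1 (cross u v)) (vscale k2 (cross u w)).
Proof. vec_ring. Qed.

Lemma vnorm_scale (c : R) (u : V3) : 0 < c -> vnorm (vscale c u) = c * vnorm u.
Proof.
  intros Hc; destruct u as [x y z]; unfold vnorm, dot, vscale; simpl.
  replace (c * x * (c * x) + c * y * (c * y) + c * z * (c * z))
    with (c² * (x * x + y * y + z * z)) by (unfold Rsqr; ring).
  rewrite sqrt_mult_alt by apply Rle_0_sqr.
  now rewrite sqrt_Rsqr by lra.
Qed.

(* Barycentric identity: the defect from [m0 T] is
   [(1 - Σ m) a1 × a2 + G × (a2 - a1)] with G the centre of mass. *)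
Lemma cross_eq_mass_scale (m0 m1 m2 : R) (a0 a1 a2 : V3) :
  m0 + m1 + m2 = 1 ->
  vadd (vadd (vscale m0 a0) (vscale m1 a1)) (vscale m2 a2) = vzero ->
  cross a1 a2 = vscale m0 (cross (vsub a1 a0) (vsub a2 a0)).
Proof.
  intros Hsum Hcm.
  transitivity
    (vadd (vscale m0 (cross (vsub a1 a0) (vsub a2 a0)))
      (vadd (vscale (1 - (m0 + m1 + m2)) (cross a1 a2))
        (cross (vadd (vadd (vscale m0 a0) (vscale m1 a1)) (vscale m2 a2)) (vsub a2 a1)))).
  - vec_ring.
  - rewrite Hsum, Hcm; vec_ring.
Qed.

Lemma barycentre_rotate (m0 m1 m2 : R) (a0 a1 a2 : V3) :
  vadd (vadd (vscale m0 a0) (vscale m1 a1)) (vscale m2 a2) =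
  vadd (vadd (vscale m1 a1) (vscale m2 a2)) (vscale m0 a0).
Proof. vec_ring. Qed.

Definition twice_area_vector (a : nat -> V3) : V3 :=
  cross (vsub (a 1%nat) (a 0%nat)) (vsub (a 2%nat) (a 0%nat)).

Lemma area_twice_area_vector (a : nat -> V3) : area a = vnorm (twice_area_vector a) / 2.
Proof. reflexivity. Qed.

Lemma m_triangle_cross (m : nat -> R) (a : nat -> V3) :
  m_triangle m a ->
  cross (a 1%nat) (a 2%nat) = vscale (m 0%nat) (twice_area_vector a) /\
  cross (a 2%nat) (a 0%nat) = vscale (m 1%nat) (twice_area_vector a) /\
  cross (a 0%nat) (a 1%nat) = vscale (m 2%nat) (twice_area_vector a).
Proof.
  intros (_ & _ & _ & Hsum & Hcm); unfold twice_area_vector.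
  assert (Hcm1 := Hcm); rewrite barycentre_rotate in Hcm1.
  assert (Hcm2 := Hcm1); rewrite barycentre_rotate in Hcm2.
  split; [|split].
  - exact (cross_eq_mass_scale _ _ _ _ _ _ Hsum Hcm).
  - rewrite <- cross_sub_common_cycle.
    apply (cross_eq_mass_scale _ (m 2%nat) (m 0%nat)); [lra | exact Hcm1].
  - rewrite <- cross_sub_common_cycle, <- cross_sub_common_cycle.
    apply (cross_eq_mass_scale _ (m 0%nat) (m 1%nat)); [lra | exact Hcm2].
Qed.

Lemma torque_twice_area_vector (m : nat -> R) (a : nat -> V3) (i : nat) :
  m_triangle m a -> (i < 3)%nat ->
  torque m a i =
  vscale (m 0%nat * m 1%nat * m 2%nat * (/ (r a i (idx i 1)) ^ 3 - / (r a i (idx i 2)) ^ 3))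
         (twice_area_vector a).
Proof.
  intros Hm Hi; destruct (m_triangle_cross m a Hm) as (H12 & H20 & H01).
  unfold torque, force; rewrite cross_lin_comb_sub.
  destruct i as [|[|[|i]]]; [| | | lia]; cbn [idx Nat.add Nat.modulo]; simpl.
  - rewrite H01, (cross_anticomm (a 2%nat)), H20.
    rewrite !vscale_vscale, vscaleDl; f_equal; unfold Rdiv; ring.
  - rewrite H12, (cross_anticomm (a 0%nat)), H01.
    rewrite !vscale_vscale, vscaleDl; f_equal; unfold Rdiv; ring.
  - rewrite H20, (cross_anticomm (a 1%nat)), H12.
    rewrite !vscale_vscale, vscaleDl; f_equal; unfold Rdiv; ring.
Qed.

Lemma torque_formula_twice_area_vector (m : nat -> R) (a : nat -> V3) (i : nat) :
  m_triangle m a -> nondegenerate a ->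
  torque_formula m a i =
  vscale (m 0%nat * m 1%nat * m 2%nat * (/ (r a i (idx i 1)) ^ 3 - / (r a i (idx i 2)) ^ 3))
         (twice_area_vector a).
Proof.
  intros Hm Hnd; pose proof Hm as (_ & _ & Hm2 & _).
  destruct (m_triangle_cross m a Hm) as (_ & _ & H01).
  assert (HT : vnorm (twice_area_vector a) <> 0).
  { intro H0; apply Hnd; rewrite area_twice_area_vector, H0; lra. }
  unfold torque_formula, unit_normal; rewrite area_twice_area_vector.
  rewrite H01, vnorm_scale by exact Hm2.
  set (k := / r a i (idx i 1) ^ 3 - / r a i (idx i 2) ^ 3).
  rewrite !vscale_vscale; f_equal; field; split; [exact HT | lra].
Qed.

Lemma has_vderiv_cross (f g : R -> V3) (t : R) (df dg : V3) :
  has_vderiv f t df -> has_vderiv g t dg ->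
  has_vderiv (fun s => cross (f s) (g s)) t (vadd (cross df (g t)) (cross (f t) dg)).
Proof.
  assert (det2 : forall f1 g1 f2 g2 d1 e1 d2 e2,
    derivable_pt_lim f1 t d1 -> derivable_pt_lim g1 t e1 ->
    derivable_pt_lim f2 t d2 -> derivable_pt_lim g2 t e2 ->
    derivable_pt_lim (fun s => f1 s * g1 s - f2 s * g2 s) t
      ((d1 * g1 t - d2 * g2 t) + (f1 t * e1 - f2 t * e2))).
  { intros f1 g1 f2 g2 d1 e1 d2 e2 H1 H2 H3 H4.
    replace ((d1 * g1 t - d2 * g2 t) + (f1 t * e1 - f2 t * e2))
      with ((d1 * g1 t + f1 t * e1) - (d2 * g2 t + f2 t * e2)) by ring.
    apply (derivable_pt_lim_minus (fun s => f1 s * g1 s) (fun s => f2 s * g2 s));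
      apply derivable_pt_lim_mult; assumption. }
  intros (Fx & Fy & Fz) (Gx & Gy & Gz).
  unfold has_vderiv, cross, vadd; simpl.
  split; [|split]; apply det2; assumption.
Qed.

Lemma has_vderiv_scale (c : R) (f : R -> V3) (t : R) (d : V3) :
  has_vderiv f t d -> has_vderiv (fun s => vscale c (f s)) t (vscale c d).
Proof.
  intros (Dx & Dy & Dz); unfold has_vderiv, vscale; simpl.
  split; [|split]; apply (derivable_pt_lim_scal (fun s => _)); assumption.
Qed.

Lemma has_vderiv_ang_mom (m : nat -> R) (q v acc : R -> nat -> V3) (t0 : R) (i : nat) :
  has_vderiv (fun s => q s i) t0 (v t0 i) ->
  has_vderiv (fun s => v s i) t0 (acc t0 i) ->
  has_vderiv (fun s => ang_mom m (q s) (v s) i) t0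
    (cross (q t0 i) (vscale (m i) (acc t0 i))).
Proof.
  intros Hq Hv; unfold ang_mom.
  replace (cross (q t0 i) (vscale (m i) (acc t0 i)))
    with (vscale (m i) (vadd (cross (v t0 i) (v t0 i)) (cross (q t0 i) (acc t0 i))))
    by vec_ring.
  exact (has_vderiv_scale (m i) _ _ _ (has_vderiv_cross _ _ _ _ _ Hq Hv)).
Qed.

Theorem mainTheorem10 (m : nat -> R) (a : nat -> V3) :
  m_triangle m a -> nondegenerate a ->
  forall i : nat, (i < 3)%nat ->
    torque m a i = torque_formula m a i /\
    (forall (q v acc : R -> nat -> V3) (t0 : R),
        q t0 = a ->
        (forall j, (j < 3)%nat ->
            has_vderiv (fun s => q s j) t0 (v t0 j) /\
            has_vderiv (fun s => v s j) t0 (acc t0 j) /\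
            vscale (m j) (acc t0 j) = force m (q t0) j) ->
        has_vderiv (fun s => ang_mom m (q s) (v s) i) t0 (torque_formula m a i)).
Proof.
  intros Hm Hnd i Hi.
  assert (Htorque : torque m a i = torque_formula m a i).
  { rewrite torque_twice_area_vector, torque_formula_twice_area_vector; auto. }
  split; [exact Htorque|].
  intros q v acc t0 Hq Hmotion.
  destruct (Hmotion i Hi) as (Hdq & Hdv & Hnewton).
  rewrite <- Htorque; unfold torque; rewrite <- Hq, <- Hnewton.
  exact (has_vderiv_ang_mom m q v acc t0 i Hdq Hdv).
Qed.
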